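(* Let $\mathcal{W}_1,\ldots,\mathcal{W}_n\subset\mathbb{R}^n$ be finite sets with convex hulls $Q_1,\ldots,Q_n$ respectively, such that each $Q_i$ is a segment (of positive length) and $Q=Q_1+\cdots+Q_n$ has dimension $n$. Then for every vector $\delta\in\mathbb{R}^n$ of sufficiently small norm which does not lie in the linear span of $F-F$ for any proper face $F$ of $Q$, $$D(\mathcal{W}_1,\ldots,\mathcal{W}_n)=|(\mathcal{W}_1+\cdots+\mathcal{W}_n)\cap(\delta+Q)|.$$
   Context: $D(\mathcal{W}_1,\ldots,\mathcal{W}_n)=\sum_{I\subset[n]}(-1)^{n-|I|}|\sum_{i\in I}\mathcal{W}_i|$, where $\sum_{i\in I}\mathcal{W}_i=\{\sum_{i\in I}w_i:w_i\in\mathcal{W}_i\}$ and the term for $I=\emptyset$ is $(-1)^n\cdot1$. *)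

From HB Require Import structures.
From mathcomp Require Import all_boot all_order all_algebra.
From Stdlib Require Import ClassicalEpsilon.
Set Implicit Arguments. Unset Strict Implicit. Unset Printing Implicit Defensive.
Import Order.TTheory GRing.Theory Num.Theory.
Local Open Scope ring_scope.

Definition pbool (P : Prop) : bool :=
  if excluded_middle_informative P then true else false.

Section Defs.
Variables (R : realFieldType) (n : nat).
Notation V := 'rV[R]_n.

Definition dotv (u v : V) : R := \sum_(i < n) u ord0 i * v ord0 i.
Definition sqnorm (u : V) : R := dotv u u.

Definition sumset (s t : seq V) : seq V := undup [seq x + y | x <- s, y <- t].

Definition msum (W : 'I_n -> seq V) (I : {set 'I_n}) : seq V :=
  foldr (fun i acc => sumset (W i) acc) [:: 0] (enum I).

Definition Dmix (W : 'I_n -> seq V) : int :=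
  \sum_(I : {set 'I_n}) (-1) ^+ (n - #|I|) * (size (msum W I))%:Z.

Definition inconv (W : seq V) (x : V) : Prop :=
  exists lam : 'I_(size W) -> R,
    (forall j, 0 <= lam j) /\ \sum_j lam j = 1 /\
    x = \sum_j lam j *: nth 0 W j.

Definition is_pos_segment (W : seq V) : Prop :=
  exists a b : V, a != b /\
    forall x, inconv W x <-> exists t : R, 0 <= t <= 1 /\ x = (1 - t) *: a + t *: b.

Definition inQ (W : 'I_n -> seq V) (x : V) : Prop :=
  exists q : 'I_n -> V, (forall i, inconv (W i) (q i)) /\ x = \sum_i q i.

Definition inspan (S : V -> Prop) (v : V) : Prop :=
  exists (k : nat) (c : 'I_k -> R) (u : 'I_k -> V),
    (forall j, S (u j)) /\ v = \sum_j c j *: u j.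

Definition diffset (F : V -> Prop) (v : V) : Prop :=
  exists x y, F x /\ F y /\ v = x - y.

Definition full_dim (S : V -> Prop) : Prop := forall v, inspan (diffset S) v.

Definition is_face (P F : V -> Prop) : Prop :=
  exists c : V, forall x, F x <-> (P x /\ forall y, P y -> dotv c y <= dotv c x).

Definition is_proper_face (P F : V -> Prop) : Prop :=
  is_face P F /\ exists x, P x /\ ~ F x.

End Defs.

From HB Require Import structures.
From mathcomp Require Import all_boot all_order all_algebra.
From mathcomp Require Import ring lra.
From Stdlib Require Import ClassicalEpsilon.
Set Implicit Arguments. Unset Strict Implicit. Unset Printing Implicit Defensive.
Import Order.TTheory GRing.Theory Num.Theory.
Local Open Scope ring_scope.

(* Let conv W_i = [a_i, b_i] and v_i = b_i - a_i.  Then Q = sum_i a_i + sum_i [0,1] v_i,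
   and since Q is full-dimensional the v_i form a basis; in the dual coordinates each
   W_i varies only in its own coordinate.  Hence a Minkowski sum of the W_i, i in I, has
   exactly prod_(i in I) |W_i| points, and expanding prod_i (|W_i| - 1) over subsets
   gives D = prod_i (|W_i| - 1).  If delta is off the direction spaces of the facets
   {coord_i = 0} of the box Q, all its coordinates are nonzero; if it is also smaller
   than the gaps between the points of each W_i, a point of W_1 + ... + W_n lies in
   delta + Q exactly when no summand is the endpoint a_i (for delta_i > 0) or b_i
   (for delta_i < 0), which leaves prod_i (|W_i| - 1) points. *)

Lemma count_allpairs (S T U : Type) (f : S -> T -> U) (P : pred U) s t :
  count P [seq f x y | x <- s, y <- t] = (\sum_(x <- s) count (P \o f x) t)%N.
Proof.
elim: s => [|x s IHs]; first by rewrite big_nil.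
by rewrite big_cons /= count_cat count_map IHs.
Qed.

Lemma sum_count_andl (S T : Type) (p : pred S) (q : pred T) s t :
  (\sum_(x <- s) count (fun y => p x && q y) t)%N = (count p s * count q t)%N.
Proof.
elim: s => [|x s IHs]; first by rewrite big_nil.
rewrite big_cons IHs /= mulnDl.
by case: (p x); rewrite ?mul1n ?mul0n // count_pred0.
Qed.

Lemma sum_subsets_signed_prod (R : comPzRingType) (T : finType) (m : T -> R) :
  \sum_(I : {set T}) (-1) ^+ (#|T| - #|I|) * \prod_(i in I) m i = \prod_i (m i - 1).
Proof.
transitivity (\prod_i \sum_(b : bool) (if b then m i else -1)); last first.
  by apply: eq_bigr => i _; rewrite big_bool.
rewrite bigA_distr_bigA /= (reindex (fun f : {ffun T -> bool} => [set i | f i])).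
  apply: eq_bigr => f _; rewrite [RHS](bigID f) /= mulrC; congr (_ * _).
    by apply: eq_big => i; rewrite ?inE // => ->.
  rewrite (eq_bigr (fun _ => -1)) => [|i /negbTE -> //].
  rewrite prodr_const -(cardC [set i | f i]) addKn; congr (_ ^+ _).
  by apply: eq_card => i; rewrite !inE.
exists (fun I : {set T} => [ffun i => i \in I]) => [f _|I _].
  by apply/ffunP => i; rewrite ffunE inE.
by apply/setP => i; rewrite inE ffunE.
Qed.

Lemma pboolP (P : Prop) : reflect P (pbool P).
Proof. by rewrite /pbool; case: excluded_middle_informative => h; constructor. Qed.

Lemma count_predC1_uniq (T : eqType) (s : seq T) e :
  uniq s -> e \in s -> count (predC1 e) s = (size s).-1.
Proof. by move=> s_uniq es; rewrite -size_filter -rem_filter ?size_rem. Qed.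

Lemma exists_pos_lower_bound (R : realDomainType) (s : seq R) :
  exists g, 0 < g /\ forall y, y \in s -> 0 < y -> g <= y.
Proof.
elim: s => [|x s [g [g0 g_lb]]]; first by exists 1.
have [x0|x_le0] := ltrP 0 x; last first.
  exists g; split=> // y; rewrite inE => /orP [/eqP -> y0|]; last exact: g_lb.
  by move: x_le0; rewrite leNgt y0.
exists (Num.min g x); split; first by rewrite lt_min g0 x0.
move=> y; rewrite inE => /orP [/eqP -> _|ys y0]; first by rewrite ge_min lexx orbT.
by rewrite ge_min g_lb.
Qed.

Section RowVectors.
Variables (R : realFieldType) (n : nat).
Local Notation V := 'rV[R]_n.

Definition mxcoord (N : 'M[R]_n) (x : V) (j : 'I_n) : R := (x *m N) 0 j.

Lemma mxcoordD N x y j : mxcoord N (x + y) j = mxcoord N x j + mxcoord N y j.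
Proof. by rewrite /mxcoord mulmxDl mxE. Qed.

Lemma mxcoord0 N j : mxcoord N 0 j = 0.
Proof. by rewrite /mxcoord mul0mx mxE. Qed.

Lemma mxcoordB N x y j : mxcoord N (x - y) j = mxcoord N x j - mxcoord N y j.
Proof. by rewrite /mxcoord mulmxBl !mxE. Qed.

Lemma mxcoordZ N t x j : mxcoord N (t *: x) j = t * mxcoord N x j.
Proof. by rewrite /mxcoord -scalemxAl mxE. Qed.

Lemma mxcoord_sum N (F : 'I_n -> V) j :
  mxcoord N (\sum_i F i) j = \sum_i mxcoord N (F i) j.
Proof. by rewrite /mxcoord mulmx_suml summxE. Qed.

Lemma normr_entry_lt_sqnorm (x : V) k e : 0 < e -> sqnorm x < e * e -> `|x 0 k| < e.
Proof.
move=> e0 x_small; have : x 0 k * x 0 k <= sqnorm x.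
  rewrite /sqnorm /dotv (bigD1 k) //= lerDl.
  by apply: sumr_ge0 => j _; rewrite -expr2 sqr_ge0.
by have [xk0|xk0] := lerP 0 (x 0 k); [rewrite ger0_norm | rewrite ltr0_norm]; nra.
Qed.

Lemma abs_mxcoord_le N (x : V) j e : (forall k, `|x 0 k| <= e) ->
  `|mxcoord N x j| <= e * \sum_k \sum_l `|N k l|.
Proof.
move=> x_small; rewrite /mxcoord mxE mulr_sumr.
apply: le_trans (ler_norm_sum _ _ _) _; apply: ler_sum => k _.
rewrite normrM; apply: ler_pM => //.
by rewrite (bigD1 j) //= lerDl; apply: sumr_ge0.
Qed.

Lemma count_sumset (s t : seq V) (P : pred V) : uniq t ->
  {in s &, forall x x', {in t &, forall y y', x + y = x' + y' -> x = x'}} ->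
  count P (sumset s t) = (\sum_(x <- undup s) count (fun y => P (x + y)%R) t)%N.
Proof.
move=> t_uniq sum_inj.
suff /permP -> : perm_eq (sumset s t) [seq (x + y)%R | x <- undup s, y <- t].
  exact: count_allpairs.
apply: uniq_perm; first exact: undup_uniq.
  apply: allpairs_uniq => //; first exact: undup_uniq.
  move=> [x y] [x' y'] /allpairsP [[x1 y1] /= [x1s y1t [-> ->]]].
  move=> /allpairsP [[x2 y2] /= [x2s y2t [-> ->]]] /= E.
  rewrite !mem_undup in x1s x2s.
  have ex : x1 = x2 by exact: sum_inj E.
  by move: E; rewrite ex => /addrI ->.
move=> z; rewrite /sumset mem_undup.
by apply/allpairsP/allpairsP => [] [[x y] /= [xs yt ->]];
  exists (x, y); rewrite ?mem_undup in xs *.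
Qed.

Section CoordinateLines.
Variables (N : 'M[R]_n) (W : 'I_n -> seq V) (a : 'I_n -> V).
Hypothesis W_coord_line :
  forall i x j, x \in W i -> j != i -> mxcoord N x j = mxcoord N (a i) j.
Hypothesis W_coord_inj : forall i, {in W i &, injective (mxcoord N ^~ i)}.

Local Notation msum_of l := (foldr (fun i acc => sumset (W i) acc) [:: 0] l).

Lemma mxcoord_msum_of l y j : y \in msum_of l -> j \notin l ->
  mxcoord N y j = \sum_(k <- l) mxcoord N (a k) j.
Proof.
elim: l y => [|i l IHl] y /=.
  by rewrite inE big_nil => /eqP -> _; rewrite mxcoord0.
rewrite /sumset mem_undup inE negb_or => /allpairsP [[x z] /= [xW zS ->]].
by move=> /andP [ji jl]; rewrite mxcoordD big_cons (W_coord_line xW) // (IHl _ zS jl).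
Qed.

Lemma msum_of_uniq l : uniq (msum_of l).
Proof. by case: l => //= i l; rewrite undup_uniq. Qed.

Lemma count_msum_of l (g : 'I_n -> pred R) : uniq l ->
  count (fun z => all (fun j => g j (mxcoord N z j)) l) (msum_of l) =
  (\prod_(i <- l) count (fun x => g i (mxcoord N x i +
      \sum_(k <- l | k != i) mxcoord N (a k) i)%R) (undup (W i)))%N.
Proof.
elim: l g => [|i l IHl] g; first by rewrite big_nil.
move=> /= /andP [il l_uniq]; have ji j : j \in l -> j != i.
  by apply: contraTneq => ->.
have sum_inj : {in W i &, forall x x',
    {in msum_of l &, forall y y', x + y = x' + y' -> x = x'}}.
  move=> x x' xW x'W y y' yS y'S /(congr1 (mxcoord N ^~ i)) /=.
  rewrite !mxcoordD (mxcoord_msum_of yS il) (mxcoord_msum_of y'S il) => /addIr.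
  exact: W_coord_inj.
rewrite count_sumset ?msum_of_uniq // big_cons.
have -> : \sum_(k <- i :: l | k != i) mxcoord N (a k) i = \sum_(k <- l) mxcoord N (a k) i.
  rewrite big_cons eqxx -big_filter; congr (\sum_(k <- _) _).
  by apply/all_filterP/allP => k /ji.
pose g' j r := g j (mxcoord N (a i) j + r).
transitivity (\sum_(x <- undup (W i))
    count (fun y => g i (mxcoord N x i + \sum_(k <- l) mxcoord N (a k) i)%R &&
                    all (fun j => g' j (mxcoord N y j)) l) (msum_of l))%N.
  apply: eq_big_seq => x; rewrite mem_undup => xW; apply: eq_in_count => y yS /=.
  rewrite mxcoordD (mxcoord_msum_of yS il); congr andb; apply: eq_in_all => j jl.
  by rewrite mxcoordD (W_coord_line xW (ji j jl)).
rewrite sum_count_andl IHl //; congr (_ * _)%N.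
apply: eq_big_seq => j jl; apply: eq_count => x /=.
by rewrite big_cons eq_sym (ji j jl) /g' addrCA.
Qed.

Lemma size_msum I : size (msum W I) = (\prod_(i in I) size (undup (W i)))%N.
Proof.
have := count_msum_of (fun _ _ => true) (enum_uniq I).
rewrite (eq_count (a2 := predT)) => [|z]; last exact: all_predT.
rewrite count_predT /msum => ->; rewrite -big_enum /=.
by apply: eq_bigr => i _; rewrite count_predT.
Qed.

End CoordinateLines.
End RowVectors.

Section ConvexHulls.
Variables (R : realFieldType) (n : nat).
Local Notation V := 'rV[R]_n.

Lemma mem_inconv (s : seq V) x : x \in s -> inconv s x.
Proof.
move=> xs; have xi : (index x s < size s)%N by rewrite index_mem.
pose j0 := Ordinal xi.
exists (fun j => (j == j0)%:R); split=> [j|]; first by rewrite ler0n.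
split; first by rewrite (bigD1 j0) //= eqxx big1 ?addr0 // => j /negbTE ->.
rewrite (bigD1 j0) //= eqxx scale1r big1 ?addr0 ?nth_index //.
by move=> j /negbTE ->; rewrite scale0r.
Qed.

(* The points of s sit at parameters t >= 0 on the segment, so a convex combination
   of them equal to p puts all its weight on points with t = 0, i.e. on p. *)
Lemma segment_endpoint_mem (s : seq V) p q : p != q ->
  (forall x, inconv s x -> exists t : R, 0 <= t <= 1 /\ x = p + t *: (q - p)) ->
  inconv s p -> p \in s.
Proof.
move=> pq s_seg [lam [lam_ge0 [lam_sum1 p_comb]]].
have /fin_all_exists [t t_def] : forall j : 'I_(size s),
    exists t : R, 0 <= t <= 1 /\ nth 0 s j = p + t *: (q - p).
  by move=> j; apply/s_seg/mem_inconv/mem_nth.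
have t_sum0 : \sum_j lam j * t j = 0.
  move: p_comb; under eq_bigr => j _ do rewrite (proj2 (t_def j)) scalerDr scalerA.
  rewrite big_split /= -scaler_suml lam_sum1 scale1r -scaler_suml => /eqP.
  rewrite -subr_eq0 opprD addrA subrr add0r oppr_eq0 scaler_eq0 subr_eq0.
  by rewrite [q == p]eq_sym (negbTE pq) orbF => /eqP.
have lamt0 j : lam j * t j = 0.
  apply: (psumr_eq0P _ t_sum0) => // k _; apply: mulr_ge0 (lam_ge0 k) _.
  by case/andP: (proj1 (t_def k)).
have [j lamj|lam0] := pickP (fun j => lam j != 0); last first.
  move: lam_sum1; rewrite big1 => [/eqP|j _]; first by rewrite eq_sym oner_eq0.
  by apply/eqP; rewrite -[_ == _]negbK lam0.
have /eqP := lamt0 j; rewrite mulf_eq0 (negbTE lamj) /= => /eqP tj0.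
by have := proj2 (t_def j); rewrite tj0 scale0r addr0 => <-; apply: mem_nth.
Qed.

End ConvexHulls.

Section SegmentSum.
Variables (R : realFieldType) (n : nat).
Local Notation V := 'rV[R]_n.
Variables (W : 'I_n -> seq V) (a b : 'I_n -> V).
Hypothesis a_neq_b : forall i, a i != b i.
Hypothesis W_segment : forall i x, inconv (W i) x <->
  exists t : R, 0 <= t <= 1 /\ x = (1 - t) *: a i + t *: b i.
Hypothesis Q_full : full_dim (inQ W).

Definition segdir i := b i - a i.
Definition corner := \sum_i a i.
Definition dirmx : 'M[R]_n := \matrix_i segdir i.
Local Notation coord := (mxcoord (invmx dirmx)).

Lemma inconv_W i x :
  inconv (W i) x <-> exists t : R, 0 <= t <= 1 /\ x = a i + t *: segdir i.
Proof.
have E t : (1 - t) *: a i + t *: b i = a i + t *: segdir i.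
  by rewrite scalerBl scale1r /segdir scalerBr addrAC addrA.
split => [/W_segment [t [t01 ->]]|[t [t01 ->]]]; first by exists t; rewrite E.
by apply/W_segment; exists t; rewrite E.
Qed.

Lemma a_in_W i : a i \in W i.
Proof.
apply: (segment_endpoint_mem (a_neq_b i)); first by move=> x /inconv_W.
by apply/inconv_W; exists 0; rewrite scale0r addr0 lexx ler01.
Qed.

Lemma b_in_W i : b i \in W i.
Proof.
have ba : b i != a i by rewrite eq_sym a_neq_b.
apply: (segment_endpoint_mem ba).
  move=> x /inconv_W [t [/andP [t0 t1] ->]]; exists (1 - t).
  rewrite subr_ge0 t1 lerBlDr lerDl t0; split=> //.
  by rewrite /segdir scalerBl scale1r -[b i - a i]opprB scalerN addrA [b i + _]addrC subrK.
by apply/inconv_W; exists 1; rewrite scale1r /segdir addrC subrK lexx ler01.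
Qed.

Lemma inQ_box x : inQ W x <->
  exists s : 'I_n -> R, (forall i, 0 <= s i <= 1) /\ x = corner + \sum_i s i *: segdir i.
Proof.
split => [[q [q_hull ->]]|[s [s01 ->]]].
  have /fin_all_exists [s s_def] i : exists t : R, 0 <= t <= 1 /\ q i = a i + t *: segdir i.
    exact/inconv_W.
  exists s; split=> [i|]; first exact: (proj1 (s_def i)).
  by rewrite /corner -big_split; apply: eq_bigr => i _; rewrite (proj2 (s_def i)).
exists (fun i => a i + s i *: segdir i); split; last by rewrite /corner big_split.
by move=> i; apply/inconv_W; exists (s i).
Qed.

(* Q - Q is spanned by the segment directions, so they form a basis. *)
Lemma dirmx_unit : dirmx \in unitmx.
Proof.
rewrite -row_full_unit -sub1mx; apply/row_subP => i.
have [k [c [u [u_diff ->]]]] := Q_full (row i 1%:M).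
apply: summx_sub => j _; apply: scalemx_sub.
have [x [y [/inQ_box [s [_ ->]] [/inQ_box [s' [_ ->]] ->]]]] := u_diff j.
have -> : corner + \sum_l s l *: segdir l - (corner + \sum_l s' l *: segdir l) =
    \row_l (s l - s' l) *m dirmx.
  rewrite mulmx_sum_row opprD addrACA subrr add0r -sumrN -big_split /=.
  by apply: eq_bigr => l _; rewrite rowK mxE scalerBl.
exact: submxMl.
Qed.

Lemma coord_segdir i j : coord (segdir i) j = (i == j)%:R.
Proof.
rewrite /mxcoord -(rowK segdir i) -row_mul mulmxV ?dirmx_unit // row1 mxE.
by rewrite eqxx /= eq_sym.
Qed.

Lemma coord_comb (s : 'I_n -> R) j : coord (\sum_i s i *: segdir i) j = s j.
Proof.
rewrite mxcoord_sum (bigD1 j) //= mxcoordZ coord_segdir eqxx mulr1.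
by rewrite big1 ?addr0 // => i ij; rewrite mxcoordZ coord_segdir (negbTE ij) mulr0.
Qed.

Lemma coord_expand x : x = \sum_i coord x i *: segdir i.
Proof.
rewrite -{1}(mulmxKV dirmx_unit x) mulmx_sum_row.
by apply: eq_bigr => i _; rewrite rowK.
Qed.

Lemma inQ_coord x : inQ W x <-> forall i, 0 <= coord (x - corner) i <= 1.
Proof.
split => [/inQ_box [s [s01 ->]] i|x01]; first by rewrite addrC addKr coord_comb.
apply/inQ_box; exists (coord (x - corner)); split=> //.
by rewrite -coord_expand addrC subrK.
Qed.

Definition seg_pos i x := coord x i - coord (a i) i.

Lemma seg_pos_W i x : x \in W i ->
  x = a i + seg_pos i x *: segdir i /\ 0 <= seg_pos i x <= 1.
Proof.
move/mem_inconv/inconv_W => [t [t01 ->]].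
by rewrite /seg_pos mxcoordD mxcoordZ coord_segdir eqxx mulr1 addrAC subrr add0r.
Qed.

Lemma coord_W i x j : x \in W i -> j != i -> coord x j = coord (a i) j.
Proof.
move/seg_pos_W => [-> _] ji.
by rewrite mxcoordD mxcoordZ coord_segdir eq_sym (negbTE ji) mulr0 addr0.
Qed.

Lemma coord_W_inj i : {in W i &, injective (coord ^~ i)}.
Proof.
move=> x x' xW x'W /= e.
by rewrite (proj1 (seg_pos_W xW)) (proj1 (seg_pos_W x'W)) /seg_pos e.
Qed.

Lemma Dmix_prod : Dmix W = (\prod_i (size (undup (W i))).-1)%:Z.
Proof.
transitivity (\prod_i ((size (undup (W i)))%:Z - 1)).
  have := sum_subsets_signed_prod (fun i => (size (undup (W i)))%:Z).
  rewrite card_ord => <-; apply: eq_bigr => I _.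
  rewrite (size_msum coord_W coord_W_inj) -natz natr_prod.
  by congr (_ * _); apply: eq_bigr => i _; rewrite natz.
rewrite -natz natr_prod; apply: eq_bigr => i _; rewrite natz predn_int //.
by rewrite lt0n size_eq0; apply/eqP => W0; have := a_in_W i; rewrite -mem_undup W0.
Qed.

Lemma count_shifted_Q delta :
  count (fun x => pbool (inQ W (x - delta))) (msum W setT) =
  (\prod_i count (fun x => 0 <= seg_pos i x - coord delta i <= 1)%R (undup (W i)))%N.
Proof.
pose g j r := 0 <= r - coord (delta + corner) j <= 1.
have := count_msum_of coord_W coord_W_inj g (enum_uniq setT).
rewrite (eq_count (a2 := fun x => pbool (inQ W (x - delta)))) => [->|z]; last first.
  apply/allP/pboolP => [z_box|/inQ_coord z_box j _]; last first.
    by rewrite /g -mxcoordB opprD addrA; apply: z_box.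
  apply/inQ_coord => j; rewrite -addrA -opprD mxcoordB.
  by apply: z_box; rewrite mem_enum inE.
rewrite big_enum; apply: eq_big => [i|i _]; first by rewrite inE.
have split_i : \sum_k coord (a k) i =
    coord (a i) i + \sum_(k <- enum [set: 'I_n] | k != i) coord (a k) i.
  rewrite big_enum_cond (bigD1 i) //=; congr (_ + _).
  by apply: eq_bigl => k; rewrite inE.
apply: eq_count => x.
rewrite /g /seg_pos mxcoordD mxcoord_sum split_i.
set S := \sum_(k <- _ | _) _.
by have -> : coord x i + S - (coord delta i + (coord (a i) i + S)) =
  coord x i - coord (a i) i - coord delta i by ring.
Qed.

Lemma seg_pos_eq0 i x : x \in W i -> (seg_pos i x == 0) = (x == a i).
Proof.
move=> xW; apply/eqP/eqP => [pos0|->]; last by rewrite /seg_pos subrr.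
by rewrite (proj1 (seg_pos_W xW)) pos0 scale0r addr0.
Qed.

Lemma seg_pos_eq1 i x : x \in W i -> (seg_pos i x == 1) = (x == b i).
Proof.
move=> xW; apply/eqP/eqP => [pos1|->].
  by rewrite (proj1 (seg_pos_W xW)) pos1 scale1r /segdir addrC subrK.
by rewrite /seg_pos -mxcoordB coord_segdir eqxx.
Qed.

Lemma seg_pos_gap : exists g, 0 < g /\ forall i x, x \in W i ->
  (0 < seg_pos i x -> g <= seg_pos i x) /\ (seg_pos i x < 1 -> g <= 1 - seg_pos i x).
Proof.
have [g [g0 g_lb]] := exists_pos_lower_bound
  ([seq seg_pos i x | i <- enum 'I_n, x <- W i] ++
   [seq 1 - seg_pos i x | i <- enum 'I_n, x <- W i]).
exists g; split=> // i x xW; split=> [pos_gt|pos_lt].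
  apply: g_lb pos_gt.
  by rewrite mem_cat (allpairs_f_dep (fun i x => seg_pos i x)) ?mem_enum.
apply: g_lb; last by rewrite subr_gt0.
by rewrite mem_cat (allpairs_f_dep (fun i x => 1 - seg_pos i x)) ?mem_enum ?orbT.
Qed.

Lemma count_seg_shift i g d : d != 0 -> `|d| < g ->
  (forall x, x \in W i ->
    (0 < seg_pos i x -> g <= seg_pos i x) /\ (seg_pos i x < 1 -> g <= 1 - seg_pos i x)) ->
  count (fun x => 0 <= seg_pos i x - d <= 1) (undup (W i)) = (size (undup (W i))).-1.
Proof.
move=> d0 d_small gap; have [d_pos|d_le0] := ltrP 0 d.
  rewrite -(count_predC1_uniq (undup_uniq _) (_ : a i \in _)) ?mem_undup ?a_in_W //.
  apply: eq_in_count => x; rewrite mem_undup => xW /=; rewrite -(seg_pos_eq0 xW).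
  have [/andP [pos0 pos1] [pos_gt _]] := (proj2 (seg_pos_W xW), gap x xW).
  move: d_small; rewrite gtr0_norm // => d_small.
  have [->|pos_neq0] := eqVneq (seg_pos i x) 0; first by apply/negP => /andP [? _]; lra.
  have /pos_gt ? : 0 < seg_pos i x by rewrite lt_def pos_neq0.
  by apply/andP; split; lra.
have d_neg : d < 0 by rewrite lt_neqAle d0.
rewrite -(count_predC1_uniq (undup_uniq _) (_ : b i \in _)) ?mem_undup ?b_in_W //.
apply: eq_in_count => x; rewrite mem_undup => xW /=; rewrite -(seg_pos_eq1 xW).
have [/andP [pos0 pos1] [_ pos_lt]] := (proj2 (seg_pos_W xW), gap x xW).
move: d_small; rewrite ltr0_norm // => d_small.
have [->|pos_neq1] := eqVneq (seg_pos i x) 1; first by apply/negP => /andP [_ ?]; lra.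
have /pos_lt ? : seg_pos i x < 1 by rewrite lt_neqAle pos_neq1.
by apply/andP; split; lra.
Qed.

Lemma corner_inQ : inQ W corner.
Proof. by apply/inQ_coord => j; rewrite subrr mxcoord0 lexx ler01. Qed.

Lemma corner_segdir_inQ k : inQ W (corner + segdir k).
Proof.
apply/inQ_coord => j; rewrite addrC addKr coord_segdir.
by case: (k == j); rewrite ?lexx ?ler01.
Qed.

Definition facet i x := inQ W x /\ coord (x - corner) i = 0.

Lemma facet_proper i : is_proper_face (inQ W) (facet i).
Proof.
have dotc y : dotv (\row_k (- invmx dirmx k i)) y = - coord y i.
  rewrite /dotv /mxcoord mxE -sumrN; apply: eq_bigr => k _.
  by rewrite mxE mulNr mulrC.
split.
  exists (\row_k (- invmx dirmx k i)) => x; rewrite dotc.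
  split=> [[xQ x0]|[xQ x_max]]; split=> //.
    move=> y /inQ_coord /(_ i) /andP [y0 _]; rewrite dotc.
    by move: x0 y0; rewrite !mxcoordB; lra.
  have := x_max _ corner_inQ; have /andP [x0 _] := proj1 (inQ_coord x) xQ i.
  by rewrite dotc; move: x0; rewrite mxcoordB; lra.
exists (corner + segdir i); split; first exact: corner_segdir_inQ.
by case=> _; rewrite addrC addKr coord_segdir eqxx; apply/eqP; rewrite oner_eq0.
Qed.

Lemma facet_span i d : coord d i = 0 -> inspan (diffset (facet i)) d.
Proof.
move=> d0; have facet_corner : facet i corner.
  by split; [exact: corner_inQ | rewrite subrr mxcoord0].
exists n, (coord d), (fun k => if k == i then 0 else segdir k); split.
  move=> k; case: ifP => ki; first by exists corner, corner; rewrite subrr.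
  exists (corner + segdir k), corner; split; last by rewrite addrC addKr.
  by split; [exact: corner_segdir_inQ | rewrite addrC addKr coord_segdir ki].
rewrite {1}(coord_expand d); apply: eq_bigr => k _.
by case: ifP => [/eqP ->|//]; rewrite d0 !scale0r.
Qed.

Lemma coord_neq0_off_faces delta i :
  (forall F : V -> Prop, is_proper_face (inQ W) F -> ~ inspan (diffset F) delta) ->
  coord delta i != 0.
Proof.
by move=> off_faces; apply/eqP => /facet_span; apply: off_faces (facet_proper i).
Qed.

Lemma count_shifted_Q_small : exists eps : R, 0 < eps /\
  forall delta : V, sqnorm delta < eps ->
    (forall F : V -> Prop, is_proper_face (inQ W) F -> ~ inspan (diffset F) delta) ->
    count (fun x => pbool (inQ W (x - delta))) (msum W setT) =
    (\prod_i (size (undup (W i))).-1)%N.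
Proof.
have [g [g0 gap]] := seg_pos_gap.
pose K := \sum_k \sum_l `|invmx dirmx k l|.
have K0 : 0 <= K by apply: sumr_ge0 => k _; apply: sumr_ge0.
pose e := g / (K + 1).
have e0 : 0 < e by rewrite divr_gt0 // ltr_wpDl.
have eK : e * K < g.
  have : e * (K + 1) = g by rewrite /e divfK // lt0r_neq0 // ltr_wpDl.
  by lra.
exists (e * e); split=> [|delta delta_small off_faces]; first exact: mulr_gt0.
rewrite count_shifted_Q; apply: eq_bigr => i _.
apply: count_seg_shift (coord_neq0_off_faces i off_faces) _ (gap i).
apply: le_lt_trans eK; apply: abs_mxcoord_le => k.
exact/ltW/normr_entry_lt_sqnorm.
Qed.

End SegmentSum.

Theorem proposition5p3 (R : realFieldType) (n : nat) (W : 'I_n -> seq 'rV[R]_n) :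
  (forall i, is_pos_segment (W i)) ->
  full_dim (inQ W) ->
  exists eps : R, 0 < eps /\
    forall delta : 'rV[R]_n, sqnorm delta < eps ->
      (forall F : 'rV[R]_n -> Prop, is_proper_face (inQ W) F ->
         ~ inspan (diffset F) delta) ->
      Dmix W = (count (fun x => pbool (inQ W (x - delta))) (msum W setT))%:Z.
Proof.
move=> W_seg Q_full.
have /fin_all_exists [ab ab_seg] i : exists ab : 'rV[R]_n * 'rV[R]_n, ab.1 != ab.2 /\
    forall x, inconv (W i) x <->
      exists t : R, 0 <= t <= 1 /\ x = (1 - t) *: ab.1 + t *: ab.2.
  by have [p [q pq_seg]] := W_seg i; exists (p, q).
have a_neq_b i := proj1 (ab_seg i); have W_segment i := proj2 (ab_seg i).
have [eps [eps0 count_eq]] := count_shifted_Q_small a_neq_b W_segment Q_full.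
exists eps; split=> // delta delta_small off_faces.
by rewrite (Dmix_prod a_neq_b W_segment Q_full) count_eq.
Qed.
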